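(* Consider an agent-dependent SDP PEP for distributed optimization in which all $n\ge2$ agents are equivalent, restricted to fully symmetric solutions $F^s=[(f^A)^T\dots(f^A)^T]$, $G^s$ with all diagonal blocks $G^A$ and all off-diagonal blocks $G^C$, and let $G^T=\frac1n(G^A+(n-1)G^C)$. Then every scale-invariant Gram-representable expression can be written, with coefficients independent of $n$, as a linear expression in $f^A$, $G^A$ and $G^T$. Specifically, for local variables $x_i=P_i\xi_x$, $y_i=P_i\xi_y$ and function values $f_i(x_i)=\xi_{f(x)}^Tf_i$: $\frac1n\sum_{i=1}^nf_i(x_i)=\xi_{f(x)}^Tf^A$, $\frac1n\sum_{i=1}^nx_i^Ty_i=\xi_x^TG^A\xi_y$, and $\frac1{n^2}\sum_{i=1}^n\sum_{j=1}^nx_i^Ty_j=\xi_x^TG^T\xi_y$.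
   Context: In the agent-dependent SDP PEP, each agent $i$ holds $p$ vector variables as the columns of $P_i\in\mathbb{R}^{d\times p}$ (same order for all agents; points common to all agents such as $x^*$ are copied into every $P_i$), and $q$ function values in $f_i\in\mathbb{R}^q$; the variables are $F=[f_1^T\dots f_n^T]$ and $G=P^TP\succeq0$, $P=[P_1\dots P_n]$, $G_{ij}=P_i^TP_j$. A coefficient vector $\xi_x\in\mathbb{R}^p$ satisfies $P_i\xi_x=x_i$ for all $i$, and $\xi_{f(x)}\in\mathbb{R}^q$ satisfies $\xi_{f(x)}^Tf_i=f_i(x_i)$ for all $i$. All agents being equivalent means swapping the blocks of any two agents in any feasible solution gives a feasible solution with equal objective; in that case the PEP may be restricted to fully symmetric solutions. A Gram-representable expression $h$ (linear in $(F,G)$) is scale-invariant if $h=\sum_jc_jh_j$ with coefficients $c_j$ independent of $n$ and each $h_j$ of one of the forms $\frac1n\sum_if_i(x_i)$, $\frac1n\sum_ix_i^Ty_i$, $\frac1{n^2}\sum_i\sum_jx_i^Ty_j$ (including $x=y$). *)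

From mathcomp Require Import all_boot all_order all_algebra.
Set Implicit Arguments. Unset Strict Implicit. Unset Printing Implicit Defensive.
Import Order.TTheory GRing.Theory Num.Theory.
Local Open Scope ring_scope.

(* Agent-dependent PEP: agent i (i : 'I_n) holds P i : 'M_(d,p) (columns are
   its p vector variables) and f i : 'cV_q (its q function values). *)
Definition gram_block (R : ringType) (n d p : nat)
  (P : 'I_n -> 'M[R]_(d, p)) (i j : 'I_n) : 'M[R]_p := (P i)^T *m P j.

Definition GTmat (R : fieldType) (n p : nat) (GA GC : 'M[R]_p) : 'M[R]_p :=
  (n%:R)^-1 *: (GA + (n.-1)%:R *: GC).

From mathcomp Require Import all_boot all_order all_algebra.
Import Order.TTheory GRing.Theory Num.Theory.
Local Open Scope ring_scope.

(* Every term x_i^T y_j equals xi_x^T G_ij xi_y, and under full symmetry the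
   n^2 blocks G_ij take only two values: G^A on the diagonal and G^C off it.
   The diagonal average is therefore G^A, and the full average is
   n (G^A + (n-1) G^C) / n^2 = G^T. *)

Lemma mulmx_gram_block (R : comRingType) (n d p k l : nat)
    (P : 'I_n -> 'M[R]_(d, p)) (u : 'M[R]_(p, k)) (v : 'M[R]_(p, l)) i j :
  (P i *m u)^T *m (P j *m v) = u^T *m gram_block P i j *m v.
Proof. by rewrite trmx_mul /gram_block !mulmxA. Qed.

Lemma scale_invn_sum_const (R : fieldType) (V : lmodType R) (n : nat)
    (F : 'I_n -> V) (c : V) :
  n%:R != 0 :> R -> (forall i, F i = c) -> (n%:R)^-1 *: \sum_(i < n) F i = c.
Proof.
move=> n0 Fc; under eq_bigr => i _ do rewrite Fc.
by rewrite sumr_const card_ord -scaler_nat scalerA mulVf // scale1r.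
Qed.

Lemma sum_diag_offdiag (V : nmodType) (n : nat) (F : 'I_n -> 'I_n -> V) a b :
    (forall i, F i i = a) -> (forall i j, i != j -> F i j = b) ->
  \sum_(i < n) \sum_(j < n) F i j = (a + b *+ n.-1) *+ n.
Proof.
move=> Fii Fij; rewrite -[n in _ *+ n]card_ord -sumr_const; apply: eq_bigr => i _.
rewrite (bigD1 i) //= Fii; congr (_ + _).
under eq_bigr => j ji do rewrite Fij 1?eq_sym //.
by rewrite sumr_const cardC1 card_ord.
Qed.

Lemma GTmat_sum_diag_offdiag (R : fieldType) (n k : nat) (A B : 'M[R]_k) :
  n%:R != 0 :> R -> (n%:R ^+ 2)^-1 *: ((A + B *+ n.-1) *+ n) = GTmat n A B.
Proof.
move=> n0; rewrite /GTmat -scaler_nat scalerA expr2 invfM // -mulrA mulVf //.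
by rewrite mulr1 scaler_nat.
Qed.

Lemma mulmx_GTmat (R : fieldType) (n p k : nat) (u : 'M[R]_(k, p))
    (v : 'M[R]_(p, k)) (A B : 'M[R]_p) :
  u *m GTmat n A B *m v = GTmat n (u *m A *m v) (u *m B *m v).
Proof.
by rewrite /GTmat -scalemxAr -scalemxAl mulmxDr mulmxDl -!scalemxAr -!scalemxAl.
Qed.

Theorem lemma4 (R : realFieldType) (n d p q : nat) (hn : (2 <= n)%N)
  (P : 'I_n -> 'M[R]_(d, p)) (f : 'I_n -> 'cV[R]_q)
  (fA : 'cV[R]_q) (GA GC : 'M[R]_p)
  (hf : forall i, f i = fA)
  (hdiag : forall i, gram_block P i i = GA)
  (hoff : forall i j, i != j -> gram_block P i j = GC)
  (xi_x xi_y : 'cV[R]_p) (xi_fx : 'cV[R]_q) :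
  let x := fun i => P i *m xi_x in
  let y := fun i => P i *m xi_y in
  let fx := fun i => xi_fx^T *m f i in
  [/\ (n%:R)^-1 *: (\sum_(i < n) fx i) = xi_fx^T *m fA,
      (n%:R)^-1 *: (\sum_(i < n) (x i)^T *m y i) = xi_x^T *m GA *m xi_y
    & (n%:R ^+ 2)^-1 *: (\sum_(i < n) \sum_(j < n) (x i)^T *m y j)
        = xi_x^T *m GTmat n GA GC *m xi_y].
Proof.
move=> x y fx.
have n0 : n%:R != 0 :> R by rewrite pnatr_eq0 -lt0n (leq_trans _ hn).
have xy i j : (x i)^T *m y j = xi_x^T *m gram_block P i j *m xi_y.
  exact: mulmx_gram_block.
split.
- by apply: scale_invn_sum_const => // i; rewrite /fx hf.
- by apply: scale_invn_sum_const => // i; rewrite xy hdiag.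
- rewrite mulmx_GTmat -GTmat_sum_diag_offdiag //; congr (_ *: _).
  apply: sum_diag_offdiag => [i | i j ij]; first by rewrite xy hdiag.
  by rewrite xy hoff.
Qed.
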